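(* Let $p$ (true dynamics) and $\hat p$ (learned model) be dynamics kernels, $\pi_D$ and $\pi$ policies, and $k\ge 0$ an integer. Suppose $$\sup_{t\ge 0}\ \mathbb E_{s\sim d_t^{\pi_D},\,a\sim \pi_D(\cdot\mid s)}\Big[D_{TV}\big(p(\cdot\mid s,a),\hat p(\cdot\mid s,a)\big)\Big]\le \epsilon_m \qquad\text{and}\qquad \sup_{s\in\mathcal S} D_{TV}\big(\pi_D(\cdot\mid s),\pi(\cdot\mid s)\big)\le\epsilon_\pi .$$ Let $\eta[\pi]=\eta(\pi,p)$ and $\eta^{\mathrm{branch}}[\pi]=\eta_k(\pi_D,p;\pi,\hat p)$. Then $$\eta[\pi]\ \ge\ \eta^{\mathrm{branch}}[\pi]-2r_{\max}\left[\frac{\gamma^{k+1}\epsilon_\pi}{(1-\gamma)^2}+\frac{(\gamma^k+2)\,\epsilon_\pi}{1-\gamma}+\frac{k}{1-\gamma}(\epsilon_m+2\epsilon_\pi)\right].$$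
   Context: Let $\mathcal S$ and $\mathcal A$ be countable (e.g. finite) state and action spaces, $\rho_0$ a probability distribution on $\mathcal S$ (initial state distribution), $\gamma\in(0,1)$ a discount factor, and $r:\mathcal S\times\mathcal A\to\mathbb R$ a reward function with $|r(s,a)|\le r_{\max}$ for all $(s,a)$. A policy is a Markov kernel $\pi(a\mid s)$ from $\mathcal S$ to $\mathcal A$; a dynamics kernel is a Markov kernel $q(s'\mid s,a)$ from $\mathcal S\times\mathcal A$ to $\mathcal S$. For a policy $\pi$ and dynamics $q$, the return is $\eta(\pi,q)=\sum_{t\ge0}\gamma^t\,\mathbb E[r(s_t,a_t)]$, where $s_0\sim\rho_0$, $a_t\sim\pi(\cdot\mid s_t)$, $s_{t+1}\sim q(\cdot\mid s_t,a_t)$. For probability distributions $\mu,\nu$ on a countable set, $D_{TV}(\mu,\nu)=\frac12\sum_x|\mu(x)-\nu(x)|$. Here $d_t^{\pi_D}$ denotes the distribution of $s_t$ when $s_0\sim\rho_0$, $a_i\sim\pi_D(\cdot\mid s_i)$, $s_{i+1}\sim p(\cdot\mid s_i,a_i)$. Branched return: given a ''pre-branch'' pair (policy $\pi^{\mathrm{pre}}$, dynamics $q^{\mathrm{pre}}$), a ''post-branch'' pair (policy $\pi^{\mathrm{post}}$, dynamics $q^{\mathrm{post}}$) and an integer $k\ge0$, for each $t\ge0$ let $m_t=\max(t-k,0)$ and generate $s_0\sim\rho_0$; for $0\le i<m_t$: $a_i\sim\pi^{\mathrm{pre}}(\cdot\mid s_i)$, $s_{i+1}\sim q^{\mathrm{pre}}(\cdot\mid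 s_i,a_i)$; for $m_t\le i<t$: $a_i\sim\pi^{\mathrm{post}}(\cdot\mid s_i)$, $s_{i+1}\sim q^{\mathrm{post}}(\cdot\mid s_i,a_i)$; finally $a_t\sim\pi^{\mathrm{post}}(\cdot\mid s_t)$. Let $d_t$ be the law of $(s_t,a_t)$ so produced. The $k$-branched return is $\eta_k(\pi^{\mathrm{pre}},q^{\mathrm{pre}};\pi^{\mathrm{post}},q^{\mathrm{post}})=\sum_{t\ge0}\gamma^t\,\mathbb E_{(s,a)\sim d_t}[r(s,a)]$. (Thus the state at time $t$ is obtained by following the pre-branch pair up to time $t-k$ and then the post-branch pair for the remaining at most $k$ steps; note $\eta_k(\pi,q;\pi,q)=\eta(\pi,q)$.) *)

From Stdlib Require Import Reals Lra ClassicalEpsilon.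
Open Scope R_scope.

Record CountType := {
  carrier :> Type;
  enc : carrier -> nat;
  dec : nat -> option carrier;
  decK : forall x, dec (enc x) = Some x
}.

(* Limit of a real sequence (0 if the sequence does not converge). *)
Definition lim (u : nat -> R) : R :=
  match excluded_middle_informative (exists l, Un_cv u l) with
  | left H => proj1_sig (constructive_indefinite_description _ H)
  | right _ => 0
  end.

(* The n-th term of the enumeration of f over a countable type
   (each element counted exactly once, at index enc x). *)
Definition cterm (X : CountType) (f : X -> R) (n : nat) : R :=
  match dec X n with
  | Some x => if Nat.eqb (enc X x) n then f x else 0
  | None => 0
  end.

Definition csum (X : CountType) (f : X -> R) : R :=
  lim (fun N => sum_f_R0 (cterm X f) N).

Definition is_dist (X : CountType) (mu : X -> R) : Prop :=
  (forall x, 0 <= mu x) /\ infinite_sum (cterm X mu) 1.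

(* Policies pol s a = pi(a|s); dynamics q s a s' = q(s'|s,a). *)
Definition is_policy (S A : CountType) (pol : S -> A -> R) : Prop :=
  forall s, is_dist A (pol s).
Definition is_dynamics (S A : CountType) (q : S -> A -> S -> R) : Prop :=
  forall s a, is_dist S (q s a).

Definition D_TV (X : CountType) (mu nu : X -> R) : R :=
  / 2 * csum X (fun x => Rabs (mu x - nu x)).

Definition step (S A : CountType) (pol : S -> A -> R) (q : S -> A -> S -> R)
  (mu : S -> R) : S -> R :=
  fun s' => csum S (fun s => csum A (fun a => mu s * pol s a * q s a s')).

Fixpoint iter_step (S A : CountType) (n : nat) (pol : S -> A -> R)
  (q : S -> A -> S -> R) (mu : S -> R) : S -> R :=
  match n with
  | O => mu
  | Datatypes.S n' => step S A pol q (iter_step S A n' pol q mu)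
  end.

Definition state_dist (S A : CountType) (rho0 : S -> R) (pol : S -> A -> R)
  (q : S -> A -> S -> R) (t : nat) : S -> R :=
  iter_step S A t pol q rho0.

Definition expect_sa (S A : CountType) (mu : S -> R) (pol : S -> A -> R)
  (f : S -> A -> R) : R :=
  csum S (fun s => csum A (fun a => mu s * pol s a * f s a)).

Definition eta (S A : CountType) (rho0 : S -> R) (gamma : R)
  (r : S -> A -> R) (pol : S -> A -> R) (q : S -> A -> S -> R) : R :=
  lim (fun N => sum_f_R0 (fun t =>
    gamma ^ t * expect_sa S A (state_dist S A rho0 pol q t) pol r) N).

(* Law of s_t in the k-branched rollout: m_t = max(t-k,0) = (t-k)%nat pre-branch
   steps, then t - m_t = min(t,k) post-branch steps. *)
Definition branch_state_dist (S A : CountType) (rho0 : S -> R)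
  (pol_pre : S -> A -> R) (q_pre : S -> A -> S -> R)
  (pol_post : S -> A -> R) (q_post : S -> A -> S -> R) (k t : nat) : S -> R :=
  iter_step S A (t - (t - k)) pol_post q_post
    (iter_step S A (t - k) pol_pre q_pre rho0).

Definition eta_branch (S A : CountType) (rho0 : S -> R) (gamma : R)
  (r : S -> A -> R) (pol_pre : S -> A -> R) (q_pre : S -> A -> S -> R)
  (pol_post : S -> A -> R) (q_post : S -> A -> S -> R) (k : nat) : R :=
  lim (fun N => sum_f_R0 (fun t =>
    gamma ^ t * expect_sa S A
      (branch_state_dist S A rho0 pol_pre q_pre pol_post q_post k t)
      pol_post r) N).

From Stdlib Require Import Reals Lra Lia FunctionalExtensionality Classical ClassicalEpsilon.
Open Scope R_scope.

(* The proof compares state distributions in l1 norm and converts distances into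
   reward differences.
   1. Countable sums: on absolutely summable functions [csum] is linear and monotone,
      |csum f| <= ||f||_1, and a Tonelli-type inequality bounds the l1 norm of column
      sums of a double series by the sum of its row norms.
   2. Kernels: [step pol q] is the push-forward of a dominated weighted kernel, hence an
      l1 contraction; replacing (pol1, q1) by (pol2, q2) for one step from nu costs at
      most 2 E_nu[TV(q1,q2)] + 2 E_nu[TV(pol1,pol2)].
   3. Rollouts: telescoping these one-step costs, and splitting the branched rollout at
      time (t - k)^+, gives ||d_t^{pi} - d_t^{branch}||_1 <= 2 ((t-k)^+ eps_pi + k (eps_m + 2 eps_pi)).
   4. Rewards are rmax-Lipschitz in the state distribution; summing against gamma^t with
      sum_t gamma^t (t-k)^+ <= gamma^(k+1)/(1-gamma)^2 and sum_t gamma^t <= 1/(1-gamma)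
      yields the theorem. *)

Lemma lim_of_cv u l : Un_cv u l -> lim u = l.
Proof.
  intros Hu. unfold lim. destruct (excluded_middle_informative _) as [Hex | Hnex].
  - destruct (constructive_indefinite_description _ Hex) as [l' Hl'].
    exact (UL_sequence _ _ _ Hl' Hu).
  - exfalso. apply Hnex. exists l. exact Hu.
Qed.

Lemma Un_cv_const c : Un_cv (fun _ => c) c.
Proof.
  intros e He. exists 0%nat. intros n _. unfold R_dist.
  rewrite Rminus_diag, Rabs_R0. exact He.
Qed.

Lemma abs_bounded_series_cv (a : nat -> R) B :
  (forall N, sum_f_R0 (fun n => Rabs (a n)) N <= B) -> {l | Un_cv (sum_f_R0 a) l}.
Proof.
  intros HB. apply cv_cauchy_2, cauchy_abs, cv_cauchy_1, growing_cv.
  - intro n. simpl. pose proof (Rabs_pos (a (S n))). lra.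
  - exists B. intros x [N ->]. apply HB.
Qed.

Lemma sum_f_R0_scal c (f : nat -> R) N : sum_f_R0 (fun t => c * f t) N = c * sum_f_R0 f N.
Proof. rewrite scal_sum. apply sum_eq. intros. ring. Qed.

Section CountableSums.
Variable X : CountType.

Lemma cterm_spec n :
  (exists x, forall f, cterm X f n = f x) \/ (forall f, cterm X f n = 0).
Proof.
  unfold cterm. destruct (dec X n) as [x |].
  - destruct (Nat.eqb (enc X x) n); [left; exists x | right]; auto.
  - right; auto.
Qed.

Lemma cterm_enc f x : cterm X f (enc X x) = f x.
Proof. unfold cterm. rewrite decK, Nat.eqb_refl. reflexivity. Qed.

Lemma cterm_le f g : (forall x, f x <= g x) -> forall n, cterm X f n <= cterm X g n.
Proof. intros H n. destruct (cterm_spec n) as [[x Hx] | Hx]; rewrite !Hx; auto; lra. Qed.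

Lemma cterm_nonneg f : (forall x, 0 <= f x) -> forall n, 0 <= cterm X f n.
Proof. intros H n. destruct (cterm_spec n) as [[x Hx] | Hx]; rewrite Hx; auto; lra. Qed.

Lemma cterm_abs f n : Rabs (cterm X f n) = cterm X (fun x => Rabs (f x)) n.
Proof. destruct (cterm_spec n) as [[x Hx] | Hx]; rewrite !Hx; auto. apply Rabs_R0. Qed.

Lemma cterm_plus f g n : cterm X (fun x => f x + g x) n = cterm X f n + cterm X g n.
Proof. destruct (cterm_spec n) as [[x Hx] | Hx]; rewrite !Hx; auto; lra. Qed.

Lemma cterm_scal c f n : cterm X (fun x => c * f x) n = c * cterm X f n.
Proof. destruct (cterm_spec n) as [[x Hx] | Hx]; rewrite !Hx; auto; lra. Qed.

Definition abs_summable (f : X -> R) : Prop :=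
  exists B, forall N, sum_f_R0 (fun n => Rabs (cterm X f n)) N <= B.

Definition l1norm (f : X -> R) : R := csum X (fun x => Rabs (f x)).

Lemma csum_cv f : abs_summable f -> Un_cv (sum_f_R0 (cterm X f)) (csum X f).
Proof.
  intros [B HB]. destruct (abs_bounded_series_cv _ B HB) as [l Hl].
  unfold csum. rewrite (lim_of_cv (fun N => sum_f_R0 (cterm X f) N) l Hl). exact Hl.
Qed.

Lemma summable_dom f g :
  (forall x, Rabs (f x) <= Rabs (g x)) -> abs_summable g -> abs_summable f.
Proof.
  intros H [B HB]. exists B. intro N. eapply Rle_trans; [| apply (HB N)].
  apply sum_Rle. intros n _. rewrite !cterm_abs. apply cterm_le, H.
Qed.

Lemma summable_le f g :
  (forall x, 0 <= f x <= g x) -> abs_summable g -> abs_summable f.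
Proof.
  intros H. apply summable_dom. intro x. destruct (H x).
  rewrite !Rabs_pos_eq; lra.
Qed.

Lemma summable_plus f g :
  abs_summable f -> abs_summable g -> abs_summable (fun x => f x + g x).
Proof.
  intros [B1 H1] [B2 H2]. exists (B1 + B2). intro N.
  specialize (H1 N). specialize (H2 N).
  eapply Rle_trans; [| apply Rplus_le_compat; eauto]. rewrite <- sum_plus.
  apply sum_Rle. intros n _. rewrite cterm_plus. apply Rabs_triang.
Qed.

Lemma summable_scal c f : abs_summable f -> abs_summable (fun x => c * f x).
Proof.
  intros [B HB]. exists (Rabs c * B). intro N.
  replace (sum_f_R0 (fun n => Rabs (cterm X (fun x => c * f x) n)) N)
    with (Rabs c * sum_f_R0 (fun n => Rabs (cterm X f n)) N).
  - apply Rmult_le_compat_l; [apply Rabs_pos | apply HB].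
  - rewrite scal_sum. apply sum_eq. intros n _. rewrite cterm_scal, Rabs_mult. ring.
Qed.

Lemma summable_abs f : abs_summable f -> abs_summable (fun x => Rabs (f x)).
Proof. apply summable_dom. intro x. rewrite Rabs_Rabsolu. lra. Qed.

Lemma summable_minus f g :
  abs_summable f -> abs_summable g -> abs_summable (fun x => f x - g x).
Proof.
  intros Hf Hg. apply (summable_plus f (fun x => -1 * g x)) in Hf; [| now apply summable_scal].
  revert Hf. apply summable_dom. intro x. right. f_equal. ring.
Qed.

Lemma summable_0 : abs_summable (fun _ => 0).
Proof.
  exists 0. intro N. right. rewrite (sum_eq _ (fun _ => 0)).
  - induction N; simpl; [| rewrite IHN]; ring.
  - intros n _. destruct (cterm_spec n) as [[x Hx] | Hx]; rewrite Hx; apply Rabs_R0.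
Qed.

Lemma summable_mul_bounded m g M :
  abs_summable m -> (forall x, Rabs (g x) <= M) -> abs_summable (fun x => m x * g x).
Proof.
  intros Hm Hg. apply (summable_dom _ (fun x => M * Rabs (m x))).
  - intro x. rewrite Rabs_mult, (Rabs_mult M), Rabs_Rabsolu, Rmult_comm.
    pose proof (Rabs_pos (g x)). pose proof (Hg x). rewrite (Rabs_pos_eq M) by lra.
    apply Rmult_le_compat_r; [apply Rabs_pos | exact (Hg x)].
  - apply summable_scal, summable_abs, Hm.
Qed.

Lemma csum_plus f g :
  abs_summable f -> abs_summable g -> csum X (fun x => f x + g x) = csum X f + csum X g.
Proof.
  intros Hf Hg. apply lim_of_cv.
  apply (Un_cv_ext (fun N => sum_f_R0 (cterm X f) N + sum_f_R0 (cterm X g) N)).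
  - intro N. rewrite <- sum_plus. apply sum_eq. intros n _. symmetry. apply cterm_plus.
  - apply CV_plus; apply csum_cv; assumption.
Qed.

Lemma csum_scal c f : abs_summable f -> csum X (fun x => c * f x) = c * csum X f.
Proof.
  intros Hf. apply lim_of_cv.
  apply (Un_cv_ext (fun N => c * sum_f_R0 (cterm X f) N)).
  - intro N. rewrite scal_sum. apply sum_eq. intros n _. rewrite cterm_scal. ring.
  - apply CV_mult; [apply Un_cv_const | apply csum_cv, Hf].
Qed.

Lemma csum_minus f g :
  abs_summable f -> abs_summable g -> csum X (fun x => f x - g x) = csum X f - csum X g.
Proof.
  intros Hf Hg.
  replace (fun x => f x - g x) with (fun x => f x + -1 * g x)
    by (extensionality x; ring).
  rewrite csum_plus, csum_scal; [ring | assumption | assumption | now apply summable_scal].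
Qed.

Lemma csum_0 : csum X (fun _ => 0) = 0.
Proof.
  replace (fun _ : X => 0) with (fun _ : X => 0 * 0) by (extensionality x; ring).
  rewrite csum_scal; [ring | apply summable_0].
Qed.

Lemma csum_le f g :
  abs_summable f -> abs_summable g -> (forall x, f x <= g x) -> csum X f <= csum X g.
Proof.
  intros Hf Hg H. eapply Rle_cv_lim; [| apply csum_cv, Hf | apply csum_cv, Hg].
  intro N. apply sum_Rle. intros n _. apply cterm_le, H.
Qed.

Lemma csum_ge0 f : abs_summable f -> (forall x, 0 <= f x) -> 0 <= csum X f.
Proof. intros Hf H. rewrite <- csum_0. apply csum_le; auto using summable_0. Qed.

Lemma l1norm_ge0 f : abs_summable f -> 0 <= l1norm f.
Proof. intros Hf. apply csum_ge0; [apply summable_abs, Hf | intro; apply Rabs_pos]. Qed.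

Lemma l1norm_nonneg f : (forall x, 0 <= f x) -> l1norm f = csum X f.
Proof. intros H. unfold l1norm. f_equal. extensionality x. apply Rabs_pos_eq, H. Qed.

Lemma csum_abs f : abs_summable f -> Rabs (csum X f) <= l1norm f.
Proof.
  intros Hf. pose proof (summable_abs f Hf) as Ha. apply Rabs_le. split.
  - replace (- l1norm f) with (csum X (fun x => -1 * Rabs (f x)))
      by (unfold l1norm; rewrite csum_scal by exact Ha; ring).
    apply csum_le; [now apply summable_scal | exact Hf |].
    intro x. pose proof (Rle_abs (- f x)). rewrite Rabs_Ropp in *. lra.
  - apply csum_le; [exact Hf | exact Ha | intro x; apply Rle_abs].
Qed.

Lemma csum_bound f B :
  (forall x, 0 <= f x) -> (forall N, sum_f_R0 (cterm X f) N <= B) ->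
  abs_summable f /\ csum X f <= B.
Proof.
  intros H0 HB.
  assert (Hs : abs_summable f).
  { exists B. intro N. rewrite (sum_eq _ (cterm X f)); [apply HB |].
    intros n _. apply Rabs_pos_eq, cterm_nonneg, H0. }
  split; [exact Hs |].
  exact (Rle_cv_lim HB (csum_cv f Hs) (Un_cv_const B)).
Qed.

Lemma partial_sum_le f N :
  abs_summable f -> (forall x, 0 <= f x) -> sum_f_R0 (cterm X f) N <= csum X f.
Proof.
  intros Hf H0. apply growing_ineq; [| apply csum_cv, Hf].
  intro n. simpl. pose proof (cterm_nonneg f H0 (S n)). lra.
Qed.

Lemma term_le_csum f x : abs_summable f -> (forall x, 0 <= f x) -> f x <= csum X f.
Proof.
  intros Hf H0. eapply Rle_trans; [| apply (partial_sum_le f (enc X x) Hf H0)].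
  rewrite <- (cterm_enc f x) at 1. destruct (enc X x) as [| n]; simpl; [lra |].
  pose proof (cond_pos_sum _ n (cterm_nonneg f H0)). lra.
Qed.

Lemma csum_finite_sum (F : nat -> X -> R) N :
  (forall m, abs_summable (F m)) ->
  abs_summable (fun x => sum_f_R0 (fun m => F m x) N) /\
  csum X (fun x => sum_f_R0 (fun m => F m x) N) = sum_f_R0 (fun m => csum X (F m)) N.
Proof.
  intros H. induction N as [| N [IHs IHe]]; simpl.
  - split; [apply H | reflexivity].
  - split; [now apply summable_plus |]. rewrite csum_plus, IHe; auto.
Qed.

Lemma dist_facts mu :
  is_dist X mu -> (forall x, 0 <= mu x) /\ abs_summable mu /\ csum X mu = 1.
Proof.
  intros [H0 H1]. assert (Hsum : csum X mu = 1) by (apply lim_of_cv; exact H1).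
  assert (HB : forall N, sum_f_R0 (cterm X mu) N <= 1).
  { intro N. apply growing_ineq; [| exact H1].
    intro n. simpl. pose proof (cterm_nonneg mu H0 (S n)). lra. }
  split; [exact H0 | split; [apply (csum_bound mu 1 H0 HB) | exact Hsum]].
Qed.

Lemma dist_scal_mass mu c : is_dist X mu -> csum X (fun x => c * mu x) = c.
Proof.
  intros Hmu. destruct (dist_facts mu Hmu) as [_ [Hs H1]].
  rewrite csum_scal, H1 by exact Hs. ring.
Qed.

Lemma l1norm_scal_dist mu c : is_dist X mu -> l1norm (fun x => c * mu x) = Rabs c.
Proof.
  intros Hmu. destruct (dist_facts mu Hmu) as [H0 _].
  unfold l1norm. rewrite <- (dist_scal_mass mu (Rabs c) Hmu). f_equal.
  extensionality x. rewrite Rabs_mult, (Rabs_pos_eq (mu x)) by apply H0. reflexivity.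
Qed.

Lemma csum_mul_bounded m g M :
  abs_summable m -> (forall x, Rabs (g x) <= M) ->
  Rabs (csum X (fun x => m x * g x)) <= M * l1norm m.
Proof.
  intros Hm Hg. pose proof (summable_mul_bounded m g M Hm Hg) as Hmg.
  eapply Rle_trans; [apply csum_abs, Hmg |].
  unfold l1norm. rewrite <- csum_scal by now apply summable_abs.
  apply csum_le; [now apply summable_abs | now apply summable_scal, summable_abs |].
  intro x. rewrite Rabs_mult, Rmult_comm.
  apply Rmult_le_compat_r; [apply Rabs_pos | apply Hg].
Qed.

Lemma dist_average mu g M :
  is_dist X mu -> (forall x, Rabs (g x) <= M) ->
  abs_summable (fun x => mu x * g x) /\ Rabs (csum X (fun x => mu x * g x)) <= M.
Proof.
  intros Hmu Hg. destruct (dist_facts mu Hmu) as [H0 [Hs H1]].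
  split; [exact (summable_mul_bounded mu g M Hs Hg) |].
  rewrite <- (Rmult_1_r M), <- H1, <- (l1norm_nonneg mu H0).
  exact (csum_mul_bounded mu g M Hs Hg).
Qed.

End CountableSums.
Arguments abs_summable {X}. Arguments l1norm {X}.

Lemma cterm_csum (X Y : CountType) (h : X -> Y -> R) m :
  cterm Y (fun y => csum X (fun x => h x y)) m = csum X (fun x => cterm Y (h x) m).
Proof.
  destruct (cterm_spec Y m) as [[y Hy] | Hy].
  - rewrite Hy. f_equal. extensionality x. rewrite Hy. reflexivity.
  - rewrite Hy. replace (fun x => cterm Y (h x) m) with (fun _ : X => 0)
      by (extensionality x; rewrite Hy; reflexivity).
    symmetry. apply csum_0.
Qed.

Lemma tonelli_le (X Y : CountType) (g : X -> Y -> R) :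
  (forall x y, 0 <= g x y) -> (forall x, abs_summable (g x)) ->
  abs_summable (fun x => csum Y (g x)) ->
  (forall y, abs_summable (fun x => g x y)) /\
  abs_summable (fun y => csum X (fun x => g x y)) /\
  csum Y (fun y => csum X (fun x => g x y)) <= csum X (fun x => csum Y (g x)).
Proof.
  intros H0 Hrow Hsum.
  assert (Hcol : forall y, abs_summable (fun x => g x y)).
  { intro y. apply (summable_le X _ (fun x => csum Y (g x))); [| exact Hsum].
    intro x. split; [apply H0 | exact (term_le_csum Y (g x) y (Hrow x) (H0 x))]. }
  assert (Hterm : forall m, abs_summable (fun x => cterm Y (g x) m)).
  { intro m. destruct (cterm_spec Y m) as [[y Hy] | Hy].
    - apply (summable_dom _ _ (fun x => g x y)); [| exact (Hcol y)].
      intro x. rewrite Hy. lra.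
    - apply (summable_dom _ _ (fun _ => 0)); [| apply summable_0].
      intro x. rewrite Hy. lra. }
  (* A partial sum of column sums is a (finite) sum of row partial sums. *)
  assert (Hpartial : forall N,
    sum_f_R0 (cterm Y (fun y => csum X (fun x => g x y))) N <= csum X (fun x => csum Y (g x))).
  { intro N. rewrite (sum_eq _ _ N (fun m _ => cterm_csum X Y g m)).
    destruct (csum_finite_sum X (fun m x => cterm Y (g x) m) N Hterm) as [Hs Heq].
    rewrite <- Heq. apply csum_le; [exact Hs | exact Hsum |].
    intro x. apply (partial_sum_le Y (g x) N (Hrow x) (H0 x)). }
  destruct (csum_bound Y _ _ (fun y => csum_ge0 X _ (Hcol y) (fun x => H0 x y)) Hpartial)
    as [Hs Hle].
  split; [exact Hcol | split; assumption].
Qed.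

Lemma csum_swap_l1 (X Y : CountType) (h : X -> Y -> R) :
  (forall x, abs_summable (h x)) -> abs_summable (fun x => l1norm (h x)) ->
  (forall y, abs_summable (fun x => h x y)) /\
  abs_summable (fun y => csum X (fun x => h x y)) /\
  l1norm (fun y => csum X (fun x => h x y)) <= csum X (fun x => l1norm (h x)).
Proof.
  intros Hrow Hnorm.
  destruct (tonelli_le X Y (fun x y => Rabs (h x y)) (fun x y => Rabs_pos _)
              (fun x => summable_abs Y _ (Hrow x)) Hnorm) as [Hcol [Hs Hle]].
  assert (Hcol' : forall y, abs_summable (fun x => h x y)).
  { intro y. eapply summable_dom; [| exact (Hcol y)]. intro x. cbv beta. rewrite Rabs_Rabsolu. lra. }
  assert (Hdom : forall y, Rabs (csum X (fun x => h x y)) <= csum X (fun x => Rabs (h x y)))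
    by (intro y; apply csum_abs, Hcol').
  assert (Hs' : abs_summable (fun y => csum X (fun x => h x y))).
  { eapply summable_dom; [| exact Hs]. intro y. cbv beta.
    rewrite (Rabs_pos_eq (csum X (fun x => Rabs (h x y))));
      [apply Hdom | apply (l1norm_ge0 X), Hcol']. }
  split; [exact Hcol' | split; [exact Hs' |]].
  eapply Rle_trans; [| exact Hle].
  apply csum_le; [now apply summable_abs | exact Hs | exact Hdom].
Qed.

Section Kernels.
Variables S A : CountType.

(* Push-forward of a weighted kernel H s a s' along (s, a) |-> s'; [step] is the
   push-forward of mu s * pol s a * q s a s'. *)
Definition push (H : S -> A -> S -> R) : S -> R :=
  fun s' => csum S (fun s => csum A (fun a => H s a s')).

Definition dominated_by (H : S -> A -> S -> R) (w : S -> A -> R) : Prop :=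
  (forall s a, abs_summable (H s a)) /\ (forall s a, l1norm (H s a) <= w s a) /\
  (forall s, abs_summable (w s)) /\ abs_summable (fun s => csum A (w s)).

Definition admissible (H : S -> A -> S -> R) : Prop := exists w, dominated_by H w.

Lemma push_bound H w :
  dominated_by H w ->
  (forall s' s, abs_summable (fun a => H s a s')) /\
  (forall s', abs_summable (fun s => csum A (fun a => H s a s'))) /\
  abs_summable (push H) /\ l1norm (push H) <= csum S (fun s => csum A (w s)).
Proof.
  intros [Hrow [Hnorm [Hw Hws]]].
  assert (Hinner : forall s,
    (forall s', abs_summable (fun a => H s a s')) /\
    abs_summable (fun s' => csum A (fun a => H s a s')) /\
    l1norm (fun s' => csum A (fun a => H s a s')) <= csum A (w s)).
  { intro s.
    assert (Hn : abs_summable (fun a => l1norm (H s a))).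
    { apply (summable_le A _ (w s)); [| exact (Hw s)].
      intro a. split; [apply (l1norm_ge0 S), Hrow | apply Hnorm]. }
    destruct (csum_swap_l1 A S (H s) (Hrow s) Hn) as [Hcol [Hsum Hle]].
    split; [exact Hcol | split; [exact Hsum |]].
    eapply Rle_trans; [exact Hle |].
    apply csum_le; [exact Hn | exact (Hw s) | apply Hnorm]. }
  assert (Hn : abs_summable (fun s => l1norm (fun s' => csum A (fun a => H s a s')))).
  { apply (summable_le S _ (fun s => csum A (w s))); [| exact Hws].
    intro s. destruct (Hinner s) as [_ [Hsum Hle]].
    split; [apply (l1norm_ge0 S), Hsum | exact Hle]. }
  destruct (csum_swap_l1 S S (fun s s' => csum A (fun a => H s a s'))
              (fun s => proj1 (proj2 (Hinner s))) Hn) as [Hcol [Hsum Hle]].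
  split; [intros s' s; apply Hinner | split; [exact Hcol | split; [exact Hsum |]]].
  eapply Rle_trans; [exact Hle |].
  apply csum_le; [exact Hn | exact Hws | intro s; apply Hinner].
Qed.

Lemma push_minus H1 H2 :
  admissible H1 -> admissible H2 ->
  forall s', push (fun s a s' => H1 s a s' - H2 s a s') s' = push H1 s' - push H2 s'.
Proof.
  intros [w1 D1] [w2 D2] s'.
  destruct (push_bound _ _ D1) as [I1 [O1 _]]. destruct (push_bound _ _ D2) as [I2 [O2 _]].
  unfold push. rewrite <- csum_minus by auto. f_equal.
  extensionality s. apply csum_minus; auto.
Qed.

Lemma push_diff_bound H1 H2 w :
  admissible H1 -> admissible H2 ->
  (forall s a, l1norm (fun s' => H1 s a s' - H2 s a s') <= w s a) ->
  (forall s, abs_summable (w s)) -> abs_summable (fun s => csum A (w s)) ->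
  l1norm (fun s' => push H1 s' - push H2 s') <= csum S (fun s => csum A (w s)).
Proof.
  intros Ad1 Ad2 Hle Hw Hws.
  pose proof Ad1 as [w1 [Hrow1 _]]. pose proof Ad2 as [w2 [Hrow2 _]].
  destruct (push_bound (fun s a s' => H1 s a s' - H2 s a s') w) as [_ [_ [_ Hbound]]].
  { split; [intros s a; apply summable_minus; auto | auto]. }
  replace (fun s' => push H1 s' - push H2 s')
    with (push (fun s a s' => H1 s a s' - H2 s a s'))
    by (extensionality s'; apply push_minus; assumption).
  exact Hbound.
Qed.

Lemma weighted_kernel_dominated pol q m :
  abs_summable m -> is_policy S A pol -> is_dynamics S A q ->
  dominated_by (fun s a s' => m s * pol s a * q s a s') (fun s a => Rabs (m s) * pol s a).
Proof.
  intros Hm Hp Hq.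
  split; [| split; [| split]].
  - intros s a. apply summable_scal, (dist_facts S _ (Hq s a)).
  - intros s a. right. rewrite l1norm_scal_dist by apply Hq.
    rewrite Rabs_mult, (Rabs_pos_eq (pol s a)) by apply (dist_facts A _ (Hp s)).
    reflexivity.
  - intro s. apply summable_scal, (dist_facts A _ (Hp s)).
  - replace (fun s => csum A (fun a => Rabs (m s) * pol s a)) with (fun s => Rabs (m s))
      by (extensionality s; symmetry; apply dist_scal_mass, Hp).
    apply summable_abs, Hm.
Qed.

Lemma step_admissible pol q mu :
  abs_summable mu -> is_policy S A pol -> is_dynamics S A q ->
  admissible (fun s a s' => mu s * pol s a * q s a s').
Proof. intros. eexists. apply weighted_kernel_dominated; assumption. Qed.

Lemma step_l1 pol q mu :
  abs_summable mu -> is_policy S A pol -> is_dynamics S A q ->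
  abs_summable (step S A pol q mu) /\ l1norm (step S A pol q mu) <= l1norm mu.
Proof.
  intros Hm Hp Hq.
  destruct (push_bound _ _ (weighted_kernel_dominated pol q mu Hm Hp Hq))
    as [_ [_ [Hs Hle]]].
  split; [exact Hs |]. eapply Rle_trans; [exact Hle |].
  right. unfold l1norm. f_equal. extensionality s. apply dist_scal_mass, Hp.
Qed.

Lemma step_nonexpansive pol q mu nu :
  abs_summable mu -> abs_summable nu -> is_policy S A pol -> is_dynamics S A q ->
  l1norm (fun s' => step S A pol q mu s' - step S A pol q nu s')
  <= l1norm (fun s => mu s - nu s).
Proof.
  intros Hm Hn Hp Hq.
  destruct (weighted_kernel_dominated pol q (fun s => mu s - nu s)
              (summable_minus S _ _ Hm Hn) Hp Hq) as [_ [Hnorm [Hw Hws]]].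
  eapply Rle_trans.
  - apply (push_diff_bound _ _ (fun s a => Rabs (mu s - nu s) * pol s a));
      [apply step_admissible; assumption .. | | exact Hw | exact Hws].
    intros s a. eapply Rle_trans; [| apply (Hnorm s a)].
    right. unfold l1norm. f_equal. extensionality s'. f_equal. ring.
  - right. unfold l1norm. f_equal. extensionality s. apply dist_scal_mass, Hp.
Qed.

End Kernels.

Lemma DTV_range (X : CountType) mu nu :
  is_dist X mu -> is_dist X nu ->
  abs_summable (fun x => mu x - nu x) /\ 0 <= D_TV X mu nu <= 1.
Proof.
  intros Hmu Hnu.
  destruct (dist_facts X _ Hmu) as [Hm0 [Hms Hm1]]. destruct (dist_facts X _ Hnu) as [Hn0 [Hns Hn1]].
  assert (Hd : abs_summable (fun x => mu x - nu x)) by (apply summable_minus; assumption).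
  split; [exact Hd |]. pose proof (l1norm_ge0 X _ Hd) as Hge. unfold D_TV, l1norm in *.
  assert (csum X (fun x => Rabs (mu x - nu x)) <= csum X (fun x => mu x + nu x)).
  { apply csum_le; [now apply summable_abs | now apply summable_plus |].
    intro x. pose proof (Rabs_triang (mu x) (- nu x)) as T.
    rewrite Rabs_Ropp, (Rabs_pos_eq (mu x)), (Rabs_pos_eq (nu x)) in T; auto. }
  rewrite csum_plus in H by assumption. lra.
Qed.

Lemma DTV_self (X : CountType) (mu : X -> R) : D_TV X mu mu = 0.
Proof.
  unfold D_TV. replace (fun x => Rabs (mu x - mu x)) with (fun _ : X => 0).
  - rewrite csum_0. ring.
  - extensionality x. rewrite Rminus_diag, Rabs_R0. reflexivity.
Qed.

Lemma expect_sa_factor (S A : CountType) mu pol f :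
  (forall s, abs_summable (fun a => pol s a * f s a)) ->
  expect_sa S A mu pol f = csum S (fun s => mu s * csum A (fun a => pol s a * f s a)).
Proof.
  intros Hs. unfold expect_sa. f_equal. extensionality s.
  rewrite <- csum_scal by apply Hs. f_equal. extensionality a. ring.
Qed.

(* nu p1 q1 - nu p2 q2 = nu p1 (q1 - q2) + nu (p1 - p2) q2. *)
Lemma prod_diff_bound nu p1 p2 x1 x2 :
  0 <= nu -> 0 <= p1 -> 0 <= x2 ->
  Rabs (nu * p1 * x1 - nu * p2 * x2) <= nu * p1 * Rabs (x1 - x2) + nu * Rabs (p1 - p2) * x2.
Proof.
  intros. replace (nu * p1 * x1 - nu * p2 * x2)
    with (nu * p1 * (x1 - x2) + nu * (p1 - p2) * x2) by ring.
  eapply Rle_trans; [apply Rabs_triang |].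
  rewrite !Rabs_mult, (Rabs_pos_eq nu), (Rabs_pos_eq p1), (Rabs_pos_eq x2); auto. lra.
Qed.

Section Perturbation.
Variables S A : CountType.
Variables (pol1 pol2 : S -> A -> R) (q1 q2 : S -> A -> S -> R).
Hypotheses (Hp1 : is_policy S A pol1) (Hp2 : is_policy S A pol2).
Hypotheses (Hq1 : is_dynamics S A q1) (Hq2 : is_dynamics S A q2).

Let Dq s a := D_TV S (q1 s a) (q2 s a).
Let Dpol s := D_TV A (pol1 s) (pol2 s).

Lemma kernel_change_bound nu s a :
  0 <= nu ->
  l1norm (fun s' => nu * pol1 s a * q1 s a s' - nu * pol2 s a * q2 s a s')
  <= nu * (2 * (pol1 s a * Dq s a) + Rabs (pol1 s a - pol2 s a)).
Proof.
  intros Hnu.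
  destruct (dist_facts S _ (Hq1 s a)) as [_ [Hs1 _]].
  destruct (dist_facts S _ (Hq2 s a)) as [H20 [Hs2 H21]].
  assert (Hd : abs_summable (fun s' => q1 s a s' - q2 s a s')) by now apply summable_minus.
  eapply Rle_trans.
  - apply (csum_le S _ (fun s' => nu * pol1 s a * Rabs (q1 s a s' - q2 s a s')
                                  + nu * Rabs (pol1 s a - pol2 s a) * q2 s a s')).
    + apply summable_abs, summable_minus; now apply summable_scal.
    + apply summable_plus; apply summable_scal; [now apply summable_abs | exact Hs2].
    + intro s'. apply prod_diff_bound; [exact Hnu | apply (dist_facts A _ (Hp1 s)) | apply H20].
  - right. rewrite csum_plus, !csum_scal, H21 by (auto using summable_abs, summable_scal).
    unfold Dq, D_TV. field.
Qed.

Lemma step_perturbation nu :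
  abs_summable nu -> (forall s, 0 <= nu s) ->
  l1norm (fun s' => step S A pol1 q1 nu s' - step S A pol2 q2 nu s')
  <= 2 * expect_sa S A nu pol1 Dq + 2 * csum S (fun s => nu s * Dpol s).
Proof.
  intros Hn Hn0.
  set (avg s := csum A (fun a => pol1 s a * Dq s a)).
  assert (Havg : forall s, abs_summable (fun a => pol1 s a * Dq s a) /\ Rabs (avg s) <= 1).
  { intro s. apply dist_average; [apply Hp1 |]. intro a.
    destruct (DTV_range S _ _ (Hq1 s a) (Hq2 s a)) as [_ HD].
    unfold Dq. rewrite Rabs_pos_eq; lra. }
  assert (Hpol : forall s, abs_summable (fun a => pol1 s a - pol2 s a) /\ 0 <= Dpol s <= 1)
    by (intro s; apply DTV_range; auto).
  set (w s a := nu s * (2 * (pol1 s a * Dq s a) + Rabs (pol1 s a - pol2 s a))).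
  assert (Hw : forall s, abs_summable (w s)).
  { intro s. apply summable_scal, summable_plus;
      [apply summable_scal, Havg | apply summable_abs, Hpol]. }
  assert (Hrows : (fun s => csum A (w s))
                  = (fun s => 2 * (nu s * avg s) + 2 * (nu s * Dpol s))).
  { extensionality s. pose proof (proj1 (Havg s)) as Hs1.
    pose proof (summable_scal A 2 _ Hs1) as H2avg.
    pose proof (summable_abs A _ (proj1 (Hpol s))) as Habs.
    unfold w. rewrite csum_scal, csum_plus, csum_scal by auto using summable_plus.
    unfold avg, Dpol, D_TV. field. }
  assert (Hnavg : abs_summable (fun s => nu s * avg s))
    by exact (summable_mul_bounded S nu _ 1 Hn (fun s => proj2 (Havg s))).
  assert (Hnpol : abs_summable (fun s => nu s * Dpol s)).
  { apply (summable_mul_bounded S nu _ 1 Hn). intro s.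
    rewrite Rabs_pos_eq; apply Hpol. }
  eapply Rle_trans.
  - apply (push_diff_bound S A _ _ w); [apply step_admissible; assumption .. | | exact Hw |].
    + intros s a. apply kernel_change_bound, Hn0.
    + rewrite Hrows. apply summable_plus; apply summable_scal; assumption.
  - right. rewrite Hrows, csum_plus, !csum_scal by auto using summable_scal.
    rewrite (expect_sa_factor S A nu pol1 Dq (fun s => proj1 (Havg s))). reflexivity.
Qed.

End Perturbation.

Section Rollouts.
Variables S A : CountType.

Definition subprob (mu : S -> R) : Prop :=
  (forall x, 0 <= mu x) /\ abs_summable mu /\ csum S mu <= 1.

Lemma dist_subprob mu : is_dist S mu -> subprob mu.
Proof. intros H. destruct (dist_facts S _ H) as [H0 [Hs H1]]. repeat split; auto. lra. Qed.

Lemma step_subprob pol q mu :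
  subprob mu -> is_policy S A pol -> is_dynamics S A q -> subprob (step S A pol q mu).
Proof.
  intros [H0 [Hs H1]] Hp Hq.
  destruct (push_bound S A _ _ (weighted_kernel_dominated S A pol q mu Hs Hp Hq))
    as [Hin [Hmid _]].
  destruct (step_l1 S A pol q mu Hs Hp Hq) as [Hss Hle].
  assert (Hnn : forall x, 0 <= step S A pol q mu x).
  { intro x. apply csum_ge0; [apply Hmid | intro s].
    apply csum_ge0; [apply Hin | intro a].
    apply Rmult_le_pos; [apply Rmult_le_pos |];
      [apply H0 | apply (dist_facts A _ (Hp s)) | apply (dist_facts S _ (Hq s a))]. }
  rewrite (l1norm_nonneg S _ Hnn), (l1norm_nonneg S _ H0) in Hle.
  repeat split; auto. lra.
Qed.

Lemma iter_subprob pol q mu n :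
  subprob mu -> is_policy S A pol -> is_dynamics S A q -> subprob (iter_step S A n pol q mu).
Proof. intros. induction n; simpl; [assumption | apply step_subprob; assumption]. Qed.

Lemma branch_subprob rho pol1 q1 pol2 q2 k t :
  subprob rho -> is_policy S A pol1 -> is_dynamics S A q1 ->
  is_policy S A pol2 -> is_dynamics S A q2 ->
  subprob (branch_state_dist S A rho pol1 q1 pol2 q2 k t).
Proof. intros. apply iter_subprob; try apply iter_subprob; assumption. Qed.

Lemma iter_step_add pol q mu n m :
  iter_step S A n pol q (iter_step S A m pol q mu) = iter_step S A (n + m) pol q mu.
Proof. induction n as [| n IH]; simpl; [reflexivity | rewrite IH; reflexivity]. Qed.

Lemma l1_triangle (f g h : S -> R) :
  abs_summable f -> abs_summable g -> abs_summable h ->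
  l1norm (fun x => f x - h x) <= l1norm (fun x => f x - g x) + l1norm (fun x => g x - h x).
Proof.
  intros Hf Hg Hh. unfold l1norm.
  rewrite <- csum_plus by auto using summable_abs, summable_minus.
  apply csum_le; auto using summable_abs, summable_minus, summable_plus.
  intro x. replace (f x - h x) with ((f x - g x) + (g x - h x)) by ring. apply Rabs_triang.
Qed.

Lemma l1_sym (f g : S -> R) : l1norm (fun x => f x - g x) = l1norm (fun x => g x - f x).
Proof. unfold l1norm. f_equal. extensionality x. apply Rabs_minus_sym. Qed.

Lemma l1_self (f : S -> R) : l1norm (fun x => f x - f x) = 0.
Proof.
  unfold l1norm. replace (fun x => Rabs (f x - f x)) with (fun _ : S => 0); [apply csum_0 |].
  extensionality x. rewrite Rminus_diag, Rabs_R0. reflexivity.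
Qed.

Lemma iter_nonexpansive pol q mu nu n :
  subprob mu -> subprob nu -> is_policy S A pol -> is_dynamics S A q ->
  l1norm (fun s => iter_step S A n pol q mu s - iter_step S A n pol q nu s)
  <= l1norm (fun s => mu s - nu s).
Proof.
  intros Hm Hn Hp Hq. induction n as [| n IH]; simpl; [apply Rle_refl |].
  eapply Rle_trans; [| exact IH]. apply step_nonexpansive; try assumption.
  - apply (iter_subprob pol q mu n Hm Hp Hq).
  - apply (iter_subprob pol q nu n Hn Hp Hq).
Qed.

Lemma telescope pol1 q1 pol2 q2 mu d :
  subprob mu ->
  is_policy S A pol1 -> is_dynamics S A q1 -> is_policy S A pol2 -> is_dynamics S A q2 ->
  (forall j, l1norm (fun s => step S A pol1 q1 (iter_step S A j pol1 q1 mu) s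
                             - step S A pol2 q2 (iter_step S A j pol1 q1 mu) s) <= d) ->
  forall n, l1norm (fun s => iter_step S A n pol1 q1 mu s - iter_step S A n pol2 q2 mu s)
            <= INR n * d.
Proof.
  intros Hm Hp1 Hq1 Hp2 Hq2 Hd n. induction n as [| n IH].
  - simpl. rewrite l1_self. lra.
  - rewrite S_INR. simpl.
    set (mu1 := iter_step S A n pol1 q1 mu). set (mu2 := iter_step S A n pol2 q2 mu).
    assert (H1 : subprob mu1) by (apply iter_subprob; assumption).
    assert (H2 : subprob mu2) by (apply iter_subprob; assumption).
    destruct H1 as [_ [Hs1 _]]. destruct H2 as [_ [Hs2 _]].
    eapply Rle_trans; [apply (l1_triangle _ (step S A pol2 q2 mu1)) |].
    1-3: apply step_l1; assumption.
    pose proof (step_nonexpansive S A pol2 q2 mu1 mu2 Hs1 Hs2 Hp2 Hq2).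
    specialize (Hd n). fold mu1 in Hd. fold mu1 mu2 in IH. lra.
Qed.

End Rollouts.

Section Rewards.
Variables S A : CountType.
Variables (pol : S -> A -> R) (r : S -> A -> R) (rmax : R).
Hypotheses (Hpol : is_policy S A pol) (Hr : forall s a, Rabs (r s a) <= rmax).

Lemma state_reward_bound s :
  abs_summable (fun a => pol s a * r s a) /\ Rabs (csum A (fun a => pol s a * r s a)) <= rmax.
Proof. apply dist_average; [apply Hpol | apply Hr]. Qed.

Lemma expected_reward_lipschitz mu nu :
  abs_summable mu -> abs_summable nu ->
  Rabs (expect_sa S A mu pol r - expect_sa S A nu pol r) <= rmax * l1norm (fun s => mu s - nu s).
Proof.
  intros Hm Hn.
  assert (Hg : forall s, Rabs (csum A (fun a => pol s a * r s a)) <= rmax)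
    by (intro s; apply state_reward_bound).
  rewrite !(expect_sa_factor S A _ pol r (fun s => proj1 (state_reward_bound s))).
  rewrite <- csum_minus by (apply (summable_mul_bounded S _ _ rmax); assumption).
  replace (fun s => mu s * csum A (fun a => pol s a * r s a)
                    - nu s * csum A (fun a => pol s a * r s a))
    with (fun s => (mu s - nu s) * csum A (fun a => pol s a * r s a))
    by (extensionality s; ring).
  apply csum_mul_bounded; [now apply summable_minus | exact Hg].
Qed.

Lemma expected_reward_bound mu :
  0 <= rmax -> subprob S mu -> Rabs (expect_sa S A mu pol r) <= rmax.
Proof.
  intros Hr0 [H0 [Hs H1]].
  rewrite (expect_sa_factor S A _ pol r (fun s => proj1 (state_reward_bound s))).
  eapply Rle_trans; [apply csum_mul_bounded; [exact Hs | apply state_reward_bound] |].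
  rewrite (l1norm_nonneg S _ H0). rewrite <- (Rmult_1_r rmax) at 2.
  apply Rmult_le_compat_l; assumption.
Qed.

End Rewards.

Section DiscountedSums.
Variable gamma : R.
Hypothesis Hg : 0 < gamma < 1.

Lemma geometric_sum_le N : sum_f_R0 (fun t => gamma ^ t) N <= 1 / (1 - gamma).
Proof.
  rewrite tech3 by lra. pose proof (pow_le gamma (S N)). unfold Rdiv.
  apply Rmult_le_compat_r; [left; apply Rinv_0_lt_compat |]; lra.
Qed.

Lemma weighted_geometric_sum N :
  sum_f_R0 (fun j => gamma ^ j * INR j) N
  + gamma ^ (S N) * (INR (S N) / (1 - gamma) + gamma / (1 - gamma) ^ 2)
  = gamma / (1 - gamma) ^ 2.
Proof.
  induction N as [| N IH].
  - simpl. field. lra.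
  - etransitivity; [| exact IH]. rewrite tech5, !S_INR. simpl pow. field. lra.
Qed.

Lemma weighted_geometric_le N :
  sum_f_R0 (fun j => gamma ^ j * INR j) N <= gamma / (1 - gamma) ^ 2.
Proof.
  rewrite <- (weighted_geometric_sum N).
  assert (0 <= gamma ^ S N * (INR (S N) / (1 - gamma) + gamma / (1 - gamma) ^ 2)); [| lra].
  apply Rmult_le_pos; [apply pow_le; lra |].
  apply Rplus_le_le_0_compat; apply Rle_mult_inv_pos;
    solve [apply pos_INR | lra | apply pow_lt; lra].
Qed.

(* sum_t gamma^t (t - k)^+ <= gamma^(k+1) / (1 - gamma)^2: the sum for k + 1 is
   gamma times the sum for k, shifted by one index. *)
Lemma shifted_weighted_geometric_le k N :
  sum_f_R0 (fun t => gamma ^ t * INR (t - k)) N <= gamma ^ (k + 1) / (1 - gamma) ^ 2.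
Proof.
  assert (Hpos : forall m, 0 <= gamma ^ m / (1 - gamma) ^ 2).
  { intro m. apply Rle_mult_inv_pos; [apply pow_le | apply pow_lt]; lra. }
  revert N. induction k as [| k IH]; intro N.
  - rewrite (sum_eq _ (fun t => gamma ^ t * INR t)) by (intros; rewrite Nat.sub_0_r; reflexivity).
    simpl. rewrite Rmult_1_r. apply weighted_geometric_le.
  - destruct N as [| N].
    { change (gamma ^ 0 * INR 0 <= gamma ^ (S k + 1) / (1 - gamma) ^ 2).
      rewrite Rmult_0_r. apply Hpos. }
    rewrite decomp_sum by lia. simpl pred. simpl Nat.sub at 1. rewrite Rmult_0_r, Rplus_0_l.
    rewrite (sum_eq _ (fun i => (gamma ^ i * INR (i - k)) * gamma))
      by (intros; simpl; ring).
    rewrite <- scal_sum. replace (S k + 1)%nat with (S (k + 1)) by lia. simpl pow.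
    unfold Rdiv. rewrite Rmult_assoc. apply Rmult_le_compat_l; [lra | apply IH].
Qed.

Lemma discounted_series_cv (a : nat -> R) M :
  (forall t, Rabs (a t) <= M) ->
  Un_cv (fun N => sum_f_R0 (fun t => gamma ^ t * a t) N)
        (lim (fun N => sum_f_R0 (fun t => gamma ^ t * a t) N)).
Proof.
  intros HM. destruct (abs_bounded_series_cv (fun t => gamma ^ t * a t) (M * (1 / (1 - gamma))))
    as [l Hl].
  - intro N. apply Rle_trans with (sum_f_R0 (fun t => gamma ^ t * M) N).
    + apply sum_Rle. intros t _. rewrite Rabs_mult, Rabs_pos_eq by (apply pow_le; lra).
      apply Rmult_le_compat_l; [apply pow_le; lra | apply HM].
    + rewrite <- scal_sum. apply Rmult_le_compat_l; [| apply geometric_sum_le].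
      pose proof (HM 0%nat). pose proof (Rabs_pos (a 0%nat)). lra.
  - rewrite (lim_of_cv (fun N => sum_f_R0 (fun t => gamma ^ t * a t) N) l Hl). exact Hl.
Qed.

Lemma discounted_gap k (a b : nat -> R) M alpha beta :
  0 <= alpha -> 0 <= beta ->
  (forall t, Rabs (a t) <= M) -> (forall t, Rabs (b t) <= M) ->
  (forall t, b t - a t <= alpha * INR (t - k) + beta) ->
  lim (fun N => sum_f_R0 (fun t => gamma ^ t * b t) N)
  - lim (fun N => sum_f_R0 (fun t => gamma ^ t * a t) N)
  <= alpha * (gamma ^ (k + 1) / (1 - gamma) ^ 2) + beta * (1 / (1 - gamma)).
Proof.
  intros Ha0 Hb0 Ha Hb Hab.
  eapply Rle_cv_lim; [| exact (CV_minus _ _ _ _ (discounted_series_cv b M Hb)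
                                                 (discounted_series_cv a M Ha))
                      | apply Un_cv_const].
  intro N. cbv beta. rewrite <- minus_sum.
  apply Rle_trans with (sum_f_R0 (fun t => alpha * (gamma ^ t * INR (t - k)) + beta * gamma ^ t) N).
  - apply sum_Rle. intros t _. rewrite <- Rmult_minus_distr_l.
    pose proof (pow_le gamma t (Rlt_le _ _ (proj1 Hg))).
    apply Rle_trans with (gamma ^ t * (alpha * INR (t - k) + beta));
      [apply Rmult_le_compat_l; auto | right; ring].
  - rewrite sum_plus, !sum_f_R0_scal.
    apply Rplus_le_compat; apply Rmult_le_compat_l;
      auto using shifted_weighted_geometric_le, geometric_sum_le.
Qed.

End DiscountedSums.

Lemma dist_inhabited (X : CountType) mu : is_dist X mu -> inhabited X.
Proof.
  intros H. destruct (classic (inhabited X)) as [Hx | Hx]; [exact Hx | exfalso].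
  destruct (dist_facts X mu H) as [_ [_ H1]].
  replace mu with (fun _ : X => 0) in H1
    by (extensionality x; exfalso; exact (Hx (inhabits x))).
  rewrite csum_0 in H1. lra.
Qed.

Section BranchedRollout.
Variables (S A : CountType) (rho0 : S -> R) (r : S -> A -> R) (rmax : R).
Variables (p phat : S -> A -> S -> R) (piD pi : S -> A -> R) (k : nat) (eps_m eps_pi : R).
Hypotheses (Hrho : is_dist S rho0) (Hr : forall s a, Rabs (r s a) <= rmax).
Hypotheses (Hp : is_dynamics S A p) (Hph : is_dynamics S A phat).
Hypotheses (HpD : is_policy S A piD) (Hpi : is_policy S A pi).
Hypothesis Hm : forall t : nat,
  expect_sa S A (state_dist S A rho0 piD p t) piD (fun s a => D_TV S (p s a) (phat s a)) <= eps_m.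
Hypothesis Hpe : forall s : S, D_TV A (piD s) (pi s) <= eps_pi.

Lemma rho_subprob : subprob S rho0.
Proof. apply dist_subprob, Hrho. Qed.

Lemma data_dist_subprob n : subprob S (state_dist S A rho0 piD p n).
Proof. apply iter_subprob; auto using rho_subprob. Qed.

(* Both S and A are inhabited, so eps_pi and rmax bound nonnegative quantities. *)
Lemma eps_pi_rmax_nonneg : 0 <= eps_pi /\ 0 <= rmax.
Proof.
  destruct (dist_inhabited S _ Hrho) as [s0]. destruct (dist_inhabited A _ (HpD s0)) as [a0].
  split.
  - pose proof (Hpe s0). pose proof (DTV_range A _ _ (HpD s0) (Hpi s0)). lra.
  - pose proof (Hr s0 a0). pose proof (Rabs_pos (r s0 a0)). lra.
Qed.

Lemma policy_shift_cost nu :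
  subprob S nu -> csum S (fun s => nu s * D_TV A (piD s) (pi s)) <= eps_pi.
Proof.
  intros [H0 [Hs H1]]. destruct eps_pi_rmax_nonneg as [He _].
  assert (Hb : forall s, 0 <= D_TV A (piD s) (pi s) <= 1)
    by (intro s; apply (DTV_range A _ _ (HpD s) (Hpi s))).
  apply Rle_trans with (csum S (fun s => eps_pi * nu s)).
  - apply csum_le; [| now apply summable_scal |].
    + apply (summable_mul_bounded S nu _ 1 Hs). intro s. rewrite Rabs_pos_eq; apply Hb.
    + intro s. pose proof (Hb s). pose proof (H0 s). pose proof (Hpe s). nra.
  - rewrite csum_scal by exact Hs. nra.
Qed.

Lemma policy_step_cost nu :
  subprob S nu ->
  l1norm (fun s' => step S A piD p nu s' - step S A pi p nu s') <= 2 * eps_pi.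
Proof.
  intros Hn. pose proof Hn as [H0 [Hs _]].
  eapply Rle_trans; [apply step_perturbation; assumption |].
  assert (Hzero : expect_sa S A nu piD (fun s a => D_TV S (p s a) (p s a)) = 0).
  { unfold expect_sa. rewrite <- (csum_0 S). f_equal. extensionality s.
    rewrite <- (csum_0 A). f_equal. extensionality a. rewrite DTV_self. ring. }
  rewrite Hzero. pose proof (policy_shift_cost nu Hn). lra.
Qed.

Lemma model_step_cost n :
  l1norm (fun s' => step S A piD p (state_dist S A rho0 piD p n) s'
                    - step S A pi phat (state_dist S A rho0 piD p n) s')
  <= 2 * (eps_m + eps_pi).
Proof.
  pose proof (data_dist_subprob n) as Hn. pose proof Hn as [H0 [Hs _]].
  eapply Rle_trans; [apply step_perturbation; assumption |].
  pose proof (policy_shift_cost _ Hn). pose proof (Hm n). lra.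
Qed.

(* eps_m + eps_pi dominates an l1 norm, hence is nonnegative. *)
Lemma eps_sum_nonneg : 0 <= eps_m + eps_pi.
Proof.
  pose proof (model_step_cost 0) as Hle.
  destruct (data_dist_subprob 0) as [_ [Hs _]].
  assert (Hsum : abs_summable (fun s' => step S A piD p (state_dist S A rho0 piD p 0) s'
                                         - step S A pi phat (state_dist S A rho0 piD p 0) s'))
    by (apply summable_minus; apply step_l1; assumption).
  pose proof (l1norm_ge0 S _ Hsum). lra.
Qed.

(* Write t = j + m with m = (t - k)^+
   pre-branch steps and j <= k post-branch steps, and compare through
     pi-then-pi  ~  piD-then-pi  ~  piD-then-piD  ~  piD-then-(pi, phat). *)
Lemma state_dist_gap t :
  l1norm (fun s => state_dist S A rho0 pi p t s
                   - branch_state_dist S A rho0 piD p pi phat k t s)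
  <= 2 * (INR (t - k) * eps_pi + INR k * (eps_m + 2 * eps_pi)).
Proof.
  destruct eps_pi_rmax_nonneg as [He _]. pose proof eps_sum_nonneg as Hem.
  unfold state_dist, branch_state_dist.
  set (m := (t - k)%nat). set (j := (t - m)%nat).
  assert (Hj : (j <= k)%nat) by (unfold j, m; lia).
  replace (iter_step S A t pi p rho0) with (iter_step S A j pi p (iter_step S A m pi p rho0))
    by (rewrite iter_step_add; f_equal; unfold j, m; lia).
  set (x0 := iter_step S A m pi p rho0). set (y0 := iter_step S A m piD p rho0).
  pose proof rho_subprob as Hrh.
  assert (Px0 : subprob S x0) by (apply iter_subprob; assumption).
  assert (Py0 : subprob S y0) by (apply iter_subprob; assumption).
  assert (Hsum : forall n pol q mu, subprob S mu -> is_policy S A pol -> is_dynamics S A q ->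
                   abs_summable (iter_step S A n pol q mu))
    by (intros; apply iter_subprob; assumption).
  assert (Gpre : l1norm (fun s => x0 s - y0 s) <= INR m * (2 * eps_pi)).
  { rewrite l1_sym. apply telescope; auto. intro i. apply policy_step_cost, iter_subprob; auto. }
  assert (Gstart : l1norm (fun s => iter_step S A j pi p x0 s - iter_step S A j pi p y0 s)
                   <= INR m * (2 * eps_pi))
    by (eapply Rle_trans; [apply iter_nonexpansive | exact Gpre]; assumption).
  assert (Gpol : l1norm (fun s => iter_step S A j pi p y0 s - iter_step S A j piD p y0 s)
                 <= INR j * (2 * eps_pi)).
  { rewrite l1_sym. apply telescope; auto. intro i. apply policy_step_cost, iter_subprob; auto. }
  assert (Gmodel : l1norm (fun s => iter_step S A j piD p y0 s - iter_step S A j pi phat y0 s)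
                   <= INR j * (2 * (eps_m + eps_pi))).
  { apply telescope; auto. intro i. unfold y0. rewrite iter_step_add. apply model_step_cost. }
  eapply Rle_trans; [apply (l1_triangle S _ (iter_step S A j pi p y0)); auto |].
  eapply Rle_trans; [apply Rplus_le_compat_l, (l1_triangle S _ (iter_step S A j piD p y0)); auto |].
  assert (INR j <= INR k) by (apply le_INR; assumption).
  pose proof (pos_INR j). fold m. nra.
Qed.

Lemma reward_gap t :
  expect_sa S A (branch_state_dist S A rho0 piD p pi phat k t) pi r
  - expect_sa S A (state_dist S A rho0 pi p t) pi r
  <= 2 * rmax * eps_pi * INR (t - k) + 2 * rmax * INR k * (eps_m + 2 * eps_pi).
Proof.
  destruct eps_pi_rmax_nonneg as [_ Hr0].
  destruct (iter_subprob S A pi p rho0 t rho_subprob Hpi Hp) as [_ [Hs1 _]].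
  destruct (branch_subprob S A rho0 piD p pi phat k t rho_subprob HpD Hp Hpi Hph)
    as [_ [Hs2 _]].
  pose proof (expected_reward_lipschitz S A pi r rmax Hpi Hr _ _ Hs2 Hs1) as Hlip.
  pose proof (Rmult_le_compat_l rmax _ _ Hr0 (state_dist_gap t)) as Hgap.
  rewrite l1_sym in Hgap.
  eapply Rle_trans; [apply Rle_abs |]. eapply Rle_trans; [exact Hlip |].
  unfold state_dist in Hgap. lra.
Qed.

End BranchedRollout.

Theorem theorem2 (S A : CountType) (rho0 : S -> R) (gamma : R)
  (r : S -> A -> R) (rmax : R)
  (p phat : S -> A -> S -> R) (piD pi : S -> A -> R) (k : nat)
  (eps_m eps_pi : R) :
  is_dist S rho0 ->
  0 < gamma < 1 ->
  (forall s a, Rabs (r s a) <= rmax) ->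
  is_dynamics S A p -> is_dynamics S A phat ->
  is_policy S A piD -> is_policy S A pi ->
  (forall t : nat,
     expect_sa S A (state_dist S A rho0 piD p t) piD
       (fun s a => D_TV S (p s a) (phat s a)) <= eps_m) ->
  (forall s : S, D_TV A (piD s) (pi s) <= eps_pi) ->
  eta S A rho0 gamma r pi p >=
  eta_branch S A rho0 gamma r piD p pi phat k
  - 2 * rmax * (gamma ^ (k + 1) * eps_pi / (1 - gamma) ^ 2
                + (gamma ^ k + 2) * eps_pi / (1 - gamma)
                + INR k / (1 - gamma) * (eps_m + 2 * eps_pi)).
Proof.
  intros Hrho Hg Hr Hp Hph HpD Hpi Hm Hpe.
  destruct (eps_pi_rmax_nonneg S A rho0 r rmax piD pi eps_pi Hrho Hr HpD Hpi Hpe)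
    as [He Hr0].
  pose proof (eps_sum_nonneg S A rho0 r rmax p phat piD pi eps_m eps_pi
                Hrho Hr Hp Hph HpD Hpi Hm Hpe) as Hem.
  pose proof (dist_subprob S _ Hrho) as Hrh.
  (* The bound of the theorem carries an extra nonnegative term. *)
  assert (Hextra : 0 <= 2 * rmax * ((gamma ^ k + 2) * eps_pi / (1 - gamma))).
  { apply Rmult_le_pos; [lra |]. apply Rle_mult_inv_pos; [| lra].
    apply Rmult_le_pos; [pose proof (pow_le gamma k); lra | exact He]. }
  apply Rle_ge.
  cut (eta_branch S A rho0 gamma r piD p pi phat k - eta S A rho0 gamma r pi p
       <= 2 * rmax * (gamma ^ (k + 1) * eps_pi / (1 - gamma) ^ 2
                      + INR k / (1 - gamma) * (eps_m + 2 * eps_pi))); [lra |].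
  unfold eta, eta_branch.
  eapply Rle_trans.
  - apply (discounted_gap gamma Hg k _ _ rmax
             (2 * rmax * eps_pi) (2 * rmax * INR k * (eps_m + 2 * eps_pi))).
    + apply Rmult_le_pos; lra.
    + apply Rmult_le_pos; [apply Rmult_le_pos; [lra | apply pos_INR] | lra].
    + intro t. apply expected_reward_bound; [assumption .. |].
      apply iter_subprob; assumption.
    + intro t. apply expected_reward_bound; auto using branch_subprob.
    + exact (reward_gap S A rho0 r rmax p phat piD pi k eps_m eps_pi
               Hrho Hr Hp Hph HpD Hpi Hm Hpe).
  - right. field. lra.
Qed.
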